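(* In every nonempty $\mathcal{V}$-poset $P$: (i) every non-basic element is comparable to at least one basic element; (ii) the set of basic elements is a maximal antichain; (iii) if an element $x$ is associated to the set of all basic elements of $P$, then the only maximal antichain of $P$ containing $x$ is $\{x\}$.
   Context: All posets are finite. A $\mathcal{V}$-poset is a poset that can be generated from the empty poset by repeatedly applying: (1) disjoint union of $\mathcal{V}$-posets, (2) adding a new greatest element, (3) adding a new least element. An element $x$ is basic if: (B.1) there are no two incomparable elements $u,v$ with $x>u$ and $x>v$; (B.2) there are no two incomparable elements $u,v$ with $x<u$ and $x<v$; (B.3) there is no element $u$ with $u<x$ such that for all $w\neq u,x$ one has ($u\ge w\iff x\ge w$) and ($u\le w\iff x\le w$). An element is associated to a set $B$ of basic elements if it is comparable to every element of $B$ and incomparable to every basic element not in $B$. An antichain is a set of pairwise incomparable elements; a maximal antichain is one not properly contained in another antichain. *)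

From HB Require Import structures.
From mathcomp Require Import all_boot all_order.
Set Implicit Arguments. Unset Strict Implicit. Unset Printing Implicit Defensive.
Import Order.TTheory.
Local Open Scope order_scope.

(* A finite poset is a finPOrderType.  [vgen A] : the induced subposet on the
   subset A of T can be generated from the empty poset by disjoint unions and
   adding a new greatest / least element. *)
Inductive vgen {d : Order.disp_t} {T : finPOrderType d} : {set T} -> Prop :=
| vgen0 : vgen set0
| vgenU (A B : {set T}) : vgen A -> vgen B -> [disjoint A & B] ->
    (forall a b, a \in A -> b \in B -> a >< b) -> vgen (A :|: B)
| vgenTop (A : {set T}) (x : T) : vgen A -> x \notin A ->
    (forall a, a \in A -> a < x) -> vgen (x |: A)
| vgenBot (A : {set T}) (x : T) : vgen A -> x \notin A ->
    (forall a, a \in A -> x < a) -> vgen (x |: A).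

Definition Vposet {d : Order.disp_t} (T : finPOrderType d) : Prop :=
  vgen [set: T].

(* basic elements: conditions (B.1), (B.2), (B.3) *)
Definition basic {d : Order.disp_t} {T : finPOrderType d} (x : T) : bool :=
  [&& [forall u : T, forall v : T, ~~ [&& u >< v, u < x & v < x]],
      [forall u : T, forall v : T, ~~ [&& u >< v, x < u & x < v]] &
      [forall u : T, ~~ ((u < x) &&
          [forall w : T, (w != u) && (w != x) ==>
             ((w <= u) == (w <= x)) && ((u <= w) == (x <= w))])]].

Definition basics {d : Order.disp_t} (T : finPOrderType d) : {set T} :=
  [set x | basic x].

Definition associated {d : Order.disp_t} {T : finPOrderType d} (x : T)
    (B : {set T}) : Prop :=
  (forall b, b \in B -> x >=< b) /\
  (forall b, basic b -> b \notin B -> x >< b).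

Definition antichain {d : Order.disp_t} {T : finPOrderType d} (A : {set T}) : Prop :=
  forall u v, u \in A -> v \in A -> u != v -> u >< v.

Definition maximal_antichain {d : Order.disp_t} {T : finPOrderType d}
    (A : {set T}) : Prop :=
  antichain A /\ forall A' : {set T}, antichain A' -> A \subset A' -> A' = A.

(* Basicness is taken relative to the subposet induced on a set [S]
   ([basic_in S]).  Along the V-construction of [S] one maintains three
   invariants ([basic_spec S]): every element is comparable to a basic one,
   basic elements are pairwise incomparable, and an element comparable to all
   basic elements is comparable to everything.  In a chain the only basic
   element is the minimum, every other element being a twin (B.3) of its
   predecessor.  A disjoint union does not change which elements are basic.
   Adding a top (resp. bottom) element [t] to a non-chain [A] keeps the basic
   elements of [A], and [t] is not basic since it has two incomparable elements
   below (resp. above) it; adding it to a chain gives a chain. *)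

From HB Require Import structures.
From mathcomp Require Import all_boot all_order.
Import Order.TTheory.
Local Open Scope order_scope.

Set Implicit Arguments.
Unset Strict Implicit.

Lemma exists_maximal {d : Order.disp_t} {T : finPOrderType d} (S : {set T}) :
  S != set0 -> exists2 m, m \in S & forall w, w \in S -> ~~ (m < w).
Proof.
case/set0Pn => x0 x0S.
have [m mS mmax] := @arg_maxnP _ x0 (mem S) (fun i => #|[set y | y <= i]|) x0S.
exists m => // w wS; apply/negP => mw.
have := mmax w wS; apply/negP; rewrite -ltnNge.
apply: proper_card; apply/properP; split.
- by apply/subsetP => y; rewrite !inE => /le_trans; apply; exact: ltW.
- by exists w; rewrite !inE ?lexx ?(lt_geF mw).
Qed.

Lemma exists_minimal {d : Order.disp_t} {T : finPOrderType d} (S : {set T}) :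
  S != set0 -> exists2 m, m \in S & forall w, w \in S -> ~~ (w < m).
Proof. exact: (@exists_maximal _ T^d). Qed.

Section BasicIn.
Context {d : Order.disp_t} {T : finPOrderType d}.
Implicit Types (A B S : {set T}) (a b m p q t u v w x y z : T).

Definition twins_in S u x : Prop :=
  forall w, w \in S -> w != u -> w != x ->
    (w <= u) = (w <= x) /\ (u <= w) = (x <= w).

Record basic_in S x : Prop := BasicIn {
  basic_in_down : forall u v, u \in S -> v \in S -> u < x -> v < x -> u >=< v;
  basic_in_up : forall u v, u \in S -> v \in S -> x < u -> x < v -> u >=< v;
  basic_in_twin : forall u, u \in S -> u < x -> ~ twins_in S u x
}.

Lemma basicE x : basic x <-> basic_in [set: T] x.
Proof.
split.
- case/and3P => /forallP B1 /forallP B2 /forallP B3; split.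
  + by move=> u v _ _ ux vx; move/forallP: (B1 u) => /(_ v); rewrite ux vx !andbT negbK.
  + by move=> u v _ _ xu xv; move/forallP: (B2 u) => /(_ v); rewrite xu xv !andbT negbK.
  + move=> u _ ux tw; move/negP: (B3 u); apply; rewrite ux /=.
    apply/forallP => w; apply/implyP => /andP[wu wx].
    by have [-> ->] := tw w (in_setT w) wu wx; rewrite !eqxx.
- case=> B1 B2 B3; apply/and3P; split.
  + apply/forallP => u; apply/forallP => v; apply/negP => /and3P[uv ux vx].
    by rewrite B1 ?in_setT in uv.
  + apply/forallP => u; apply/forallP => v; apply/negP => /and3P[uv xu xv].
    by rewrite B2 ?in_setT in uv.
  + apply/forallP => u; apply/negP => /andP[ux /forallP tw].
    apply: B3 (in_setT u) ux _ => w _ wu wx.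
    by move: (tw w); rewrite wu wx => /andP[/eqP -> /eqP ->].
Qed.

Lemma twins_in_setU A B u x :
  (forall w, w \in B -> (w <= u) = (w <= x) /\ (u <= w) = (x <= w)) ->
  twins_in (B :|: A) u x <-> twins_in A u x.
Proof.
move=> twB; split=> tw w wS wu wx; first by apply: tw; rewrite // inE wS orbT.
by case/setUP: wS => [/twB|wA]; last exact: tw.
Qed.

Lemma chain_basic_inN S y z :
  {in S &, forall p q, p >=< q} -> z \in S -> z < y -> y \in S -> ~ basic_in S y.
Proof.
move=> chainS zS zy yS [_ _ no_twin].
have /exists_maximal[u] : [set w in S | w < y] != set0.
  by apply/set0Pn; exists z; rewrite inE zS zy.
rewrite inE => /andP[uS uy] umax.
have above w : w \in S -> w != y -> u < w -> y < w.
  move=> wS wy uw; case: (comparable_ltgtP (chainS y w yS wS)) wy => // wy _.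
  by move: (umax w); rewrite inE wS wy uw => /(_ isT).
apply: (no_twin u uS uy) => w wS wu wy.
case: (comparable_ltgtP (chainS w u wS uS)) wu => // [wu|uw] _.
- by rewrite (ltW (lt_trans wu uy)) (lt_geF (lt_trans wu uy)).
- by have yw := above w wS wy uw; rewrite (lt_geF yw) (ltW yw).
Qed.

Lemma chain_minimal_basic_in S m :
  {in S &, forall p q, p >=< q} -> m \in S -> (forall w, w \in S -> ~~ (w < m)) ->
  basic_in S m.
Proof.
move=> chainS mS mmin; split=> [u v uS _ um|u v uS vS _ _|u uS um].
- by have := mmin u uS; rewrite um.
- exact: chainS.
- by have := mmin u uS; rewrite um.
Qed.

Record basic_spec S : Prop := BasicSpec {
  basic_spec_cover : forall x, x \in S -> exists b, [/\ b \in S, basic_in S b & x >=< b];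
  basic_spec_incomparable : forall a b, a \in S -> b \in S ->
    basic_in S a -> basic_in S b -> a != b -> a >< b;
  basic_spec_comparable : forall x y, x \in S -> y \in S ->
    (forall b, b \in S -> basic_in S b -> x >=< b) -> x >=< y
}.

Lemma chain_basic_spec S : {in S &, forall p q, p >=< q} -> basic_spec S.
Proof.
move=> chainS; split.
- move=> x xS; have /exists_minimal[m mS mmin] : S != set0 by apply/set0Pn; exists x.
  by exists m; split; [|exact: chain_minimal_basic_in|exact: chainS].
- move=> a b aS bS aB bB; case: (comparable_ltgtP (chainS a b aS bS)) => // [ab|ba].
  + by case: (chain_basic_inN chainS aS ab bS bB).
  + by case: (chain_basic_inN chainS bS ba aS aB).
- by move=> x y xS yS _; exact: chainS.
Qed.

Lemma basic_in_union A B y :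
  (forall a b, a \in A -> b \in B -> a >< b) -> y \in A ->
  basic_in (A :|: B) y <-> basic_in A y.
Proof.
move=> AB yA.
have inA u : u \in A :|: B -> y >=< u -> u \in A.
  by case/setUP => // uB; rewrite (negbTE (AB y u yA uB)).
have twinsE u : u \in A -> twins_in (A :|: B) u y <-> twins_in A u y.
  move=> uA; rewrite setUC; apply: twins_in_setU => w wB.
  have /norP[/negbTE -> /negbTE ->] := AB u w uA wB.
  by have /norP[/negbTE -> /negbTE ->] := AB y w yA wB.
split=> -[down up twin]; split.
- by move=> u v uA vA; apply: down; rewrite inE ?uA ?vA.
- by move=> u v uA vA; apply: up; rewrite inE ?uA ?vA.
- by move=> u uA uy /(twinsE u uA); apply: twin; rewrite // inE uA.
- move=> u v uS vS uy vy.
  exact: down (inA u uS (gt_comparable uy)) (inA v vS (gt_comparable vy)) uy vy.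
- move=> u v uS vS yu yv.
  exact: up (inA u uS (lt_comparable yu)) (inA v vS (lt_comparable yv)) yu yv.
- move=> u uS uy; have uA := inA u uS (gt_comparable uy).
  by move=> /(twinsE u uA); apply: twin.
Qed.

Lemma basic_in_add_top A t y :
  (forall a, a \in A -> a < t) -> y \in A ->
  basic_in (t |: A) y <-> basic_in A y.
Proof.
move=> At yA.
have inA u : u \in t |: A -> u < y -> u \in A.
  by case/setU1P => // ->; rewrite lt_gtF ?At.
have tS v : v \in t |: A -> t >=< v.
  by case/setU1P => [->|/At/gt_comparable //]; exact: comparablexx.
have twinsE u : u \in A -> twins_in (t |: A) u y <-> twins_in A u y.
  move=> uA; apply: twins_in_setU => w; rewrite inE => /eqP->.
  by rewrite (lt_geF (At u uA)) (lt_geF (At y yA)) (ltW (At u uA)) (ltW (At y yA)).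
split=> -[down up twin]; split.
- by move=> u v uA vA; apply: down; rewrite !inE ?uA ?vA orbT.
- by move=> u v uA vA; apply: up; rewrite !inE ?uA ?vA orbT.
- by move=> u uA uy /(twinsE u uA); apply: twin; rewrite // !inE uA orbT.
- by move=> u v uS vS uy vy; apply: down (inA u uS uy) (inA v vS vy) uy vy.
- move=> u v /setU1P[->|uA] vS yu yv; first exact: tS.
  case/setU1P: vS yv => [-> _|vA yv]; last exact: up.
  by rewrite comparable_sym tS // !inE uA orbT.
- move=> u uS uy; have uA := inA u uS uy.
  by move=> /(twinsE u uA); apply: twin.
Qed.

Lemma basic_in_add_bot A b y p q :
  (forall a, a \in A -> b < a) -> y \in A -> p \in A -> q \in A -> p >< q ->
  basic_in (b |: A) y <-> basic_in A y.
Proof.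
move=> Ab yA pA qA pq.
have inA u : u \in b |: A -> y < u -> u \in A.
  by case/setU1P => // ->; rewrite lt_gtF ?Ab.
have bS v : v \in b |: A -> b >=< v.
  by case/setU1P => [->|/Ab/lt_comparable //]; exact: comparablexx.
have twinsE u : u \in A -> twins_in (b |: A) u y <-> twins_in A u y.
  move=> uA; apply: twins_in_setU => w; rewrite inE => /eqP->.
  by rewrite (lt_geF (Ab u uA)) (lt_geF (Ab y yA)) (ltW (Ab u uA)) (ltW (Ab y yA)).
split=> -[down up twin]; split.
- by move=> u v uA vA; apply: down; rewrite !inE ?uA ?vA orbT.
- by move=> u v uA vA; apply: up; rewrite !inE ?uA ?vA orbT.
- by move=> u uA uy /(twinsE u uA); apply: twin; rewrite // !inE uA orbT.
- move=> u v /setU1P[->|uA] vS uy vy; first exact: bS.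
  case/setU1P: vS vy => [-> _|vA vy]; last exact: down.
  by rewrite comparable_sym bS // !inE uA orbT.
- by move=> u v uS vS yu yv; apply: up (inA u uS yu) (inA v vS yv) yu yv.
- move=> u /setU1P[->|uA] uy; last by move=> /(twinsE u uA); apply: twin.
  (* a twin [b] of [y] puts [y] below all of [A], so B.2 for [y] makes [A] a chain *)
  move=> tw; have above w : w \in A -> y <= w.
    move=> wA; have [->|wy] := eqVneq w y; first exact: lexx.
    have wb : w != b by apply: contraTneq (Ab w wA) => ->; rewrite ltxx.
    have wS : w \in b |: A by rewrite !inE wA orbT.
    by have [_] := tw w wS wb wy; rewrite (ltW (Ab w wA)) => <-.
  move/negP: pq; apply; have [->|py] := eqVneq p y; first exact: le_comparable (above q qA).
  have [->|qy] := eqVneq q y; first exact: ge_comparable (above p pA).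
  by apply: up; rewrite // lt_neqAle eq_sym ?py ?qy above.
Qed.

Lemma basic_spec_union A B :
  (forall a b, a \in A -> b \in B -> a >< b) -> basic_spec A -> basic_spec B ->
  basic_spec (A :|: B).
Proof.
move=> AB [coverA incA compA] [coverB incB compB].
have BA b a : b \in B -> a \in A -> b >< a by move=> bB aA; rewrite comparable_sym AB.
have EA y : y \in A -> basic_in (A :|: B) y <-> basic_in A y := basic_in_union AB.
have EB y : y \in B -> basic_in (A :|: B) y <-> basic_in B y.
  by rewrite setUC; exact: basic_in_union BA.
have SA b : b \in A -> b \in A :|: B by move=> bA; rewrite inE bA.
have SB b : b \in B -> b \in A :|: B by move=> bB; rewrite inE bB orbT.
split.
- move=> x /setUP[/coverA|/coverB] [b [bX bb xb]].
  + by exists b; split; [exact: SA | exact/(EA b bX) |].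
  + by exists b; split; [exact: SB | exact/(EB b bX) |].
- move=> a b /setUP[aA|aB] /setUP[bA|bB] ab bb.
  + by apply: incA => //; [exact/(EA a aA) | exact/(EA b bA)].
  + by move=> _; apply: AB.
  + by move=> _; apply: BA.
  + by apply: incB => //; [exact/(EB a aB) | exact/(EB b bB)].
- move=> x y /setUP[xA|xB] /setUP[yA|yB] xbasics.
  + by apply: compA => // b bA bb; apply: xbasics; [exact: SA | exact/(EA b bA)].
  + have [b [bB bb _]] := coverB y yB.
    by move: (AB x b xA bB); rewrite xbasics //; [exact: SB | exact/(EB b bB)].
  + have [b [bA bb _]] := coverA y yA.
    by move: (BA x b xB bA); rewrite xbasics //; [exact: SA | exact/(EA b bA)].
  + by apply: compB => // b bB bb; apply: xbasics; [exact: SB | exact/(EB b bB)].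
Qed.

Lemma chain_or_incomparable S :
  {in S &, forall p q, p >=< q} \/ exists p q, [/\ p \in S, q \in S & p >< q].
Proof.
have [chainS|] := boolP [forall p in S, forall q in S, p >=< q].
  by left => p q pS qS; move/forall_inP/(_ p pS)/forall_inP: chainS; apply.
case/forall_inPn => p pS /forall_inPn[q qS pq]; right; by exists p, q.
Qed.

Lemma chain_setU1 S t :
  {in S &, forall p q, p >=< q} -> (forall a, a \in S -> t >=< a) ->
  {in t |: S &, forall p q, p >=< q}.
Proof.
move=> chainS tS p q /setU1P[->|pS] /setU1P[->|qS].
- exact: comparablexx.
- exact: tS.
- by rewrite comparable_sym tS.
- exact: chainS.
Qed.

Lemma basic_spec_setU1 A t :
  basic_spec A -> (forall a, a \in A -> t >=< a) ->
  (forall p q, p \in A -> q \in A -> p >< q ->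
    ~ basic_in (t |: A) t /\
    forall y, y \in A -> basic_in (t |: A) y <-> basic_in A y) ->
  basic_spec (t |: A).
Proof.
move=> [coverA incA compA] tA nonchain.
have [chainA|[p [q [pA qA pq]]]] := chain_or_incomparable A.
  exact/chain_basic_spec/chain_setU1.
have [tNbasic E] := nonchain p q pA qA pq.
have SA y : y \in A -> y \in t |: A by move=> yA; rewrite !inE yA orbT.
split.
- move=> x /setU1P[->|xA].
  + have [b [bA bb _]] := coverA p pA.
    by exists b; split; [exact: SA | exact/(E b bA) | exact: tA].
  + have [b [bA bb xb]] := coverA x xA.
    by exists b; split; [exact: SA | exact/(E b bA) |].
- move=> a b /setU1P[->|aA] /setU1P[->|bA] ab bb //; try by case: tNbasic.
  by apply: incA => //; [exact/(E a aA) | exact/(E b bA)].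
- move=> x y /setU1P[->|xA] /setU1P[->|yA] xbasics.
  + exact: comparablexx.
  + exact: tA.
  + by rewrite comparable_sym tA.
  + by apply: compA => // b bA bb; apply: xbasics; [exact: SA | exact/(E b bA)].
Qed.

Lemma vgen_basic_spec S : vgen S -> basic_spec S.
Proof.
elim=> [|A B _ specA _ specB _ AB|A t _ specA _ A_lt_t|A t _ specA _ t_lt_A].
- by apply: chain_basic_spec => p q; rewrite inE.
- exact: basic_spec_union.
- apply: basic_spec_setU1 => [//|a /A_lt_t/gt_comparable // | p q pA qA pq].
  split=> [[down _ _]|y yA]; last exact: basic_in_add_top.
  by rewrite down ?A_lt_t // !inE ?pA ?qA orbT in pq.
- apply: basic_spec_setU1 => [//|a /t_lt_A/lt_comparable // | p q pA qA pq].
  split=> [[_ up _]|y yA]; last exact: basic_in_add_bot t_lt_A yA pA qA pq.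
  by rewrite up ?t_lt_A // !inE ?pA ?qA orbT in pq.
Qed.

End BasicIn.

Theorem proposition3p12 (d : Order.disp_t) (T : finPOrderType d) :
  Vposet T -> (0 < #|T|)%N ->
  (forall x : T, ~~ basic x -> exists b : T, basic b /\ x >=< b) /\
  maximal_antichain (basics T) /\
  (forall x : T, associated x (basics T) ->
     forall A : {set T}, maximal_antichain A -> x \in A -> A = [set x]).
Proof.
move=> /vgen_basic_spec[cover incomparable comparable] _.
have basic_cover (x : T) : exists b, basic b /\ x >=< b.
  by have [b [_ /basicE bb xb]] := cover x (in_setT x); exists b.
split; [|split].
- by move=> x _; exact: basic_cover.
- split=> [a b|A antiA basicsA].
    by rewrite !inE => /basicE aB /basicE bB; exact: incomparable.
  apply/eqP; rewrite eqEsubset basicsA andbT; apply/subsetP => y yA.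
  have [b [bb yb]] := basic_cover y.
  have bA : b \in A by apply: (subsetP basicsA); rewrite inE.
  have [->|yNb] := eqVneq y b; first by rewrite inE.
  by move: (antiA y b yA bA yNb); rewrite yb.
- move=> x [x_basics _] A [antiA _] xA; apply/setP => y; rewrite inE.
  have [->|yNx] := eqVneq y x; first exact: xA.
  have xy : x >=< y.
    apply: comparable; rewrite ?in_setT // => b _ /basicE bb.
    by apply: x_basics; rewrite inE.
  by apply: contraTF xy => yA; apply: antiA; rewrite // eq_sym.
Qed.
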